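(* Let $(A,H,D,J)$ be a finite-dimensional real spectral triple, and with $D_0,D_1,D_R$ as in the context assume that $D_R$ commutes with every element of $A$. Then the 2nd order condition holds (i.e. every element of $\mathcal{C}\ell_D(A)$ commutes with every element of $\mathcal{C}\ell_D(A)^\circ$) if and only if $[D_0,D_1]=0$.
   Context: A finite-dimensional real spectral triple $(A,H,D,J)$ consists of a finite-dimensional complex Hilbert space $H$, a unital (real or complex) $*$-subalgebra $A\subseteq\mathrm{End}_{\mathbb{C}}(H)$, a selfadjoint operator $D$ on $H$, and an antilinear isometry $J$ with $J^2=\varepsilon1$, $JD=\varepsilon'DJ$ ($\varepsilon,\varepsilon'\in\{\pm1\}$; in the even case also $J\gamma=\varepsilon''\gamma J$ for a grading $\gamma$ commuting with $A$ and anticommuting with $D$), such that $[a,JbJ^{-1}]=0$ and $[[D,a],JbJ^{-1}]=0$ for all $a,b\in A$. Let $A_{\mathbb{C}}$ be the complex $*$-subalgebra generated by $A$, $A_{\mathbb{C}}\cong\bigoplus_{i=1}^N M_{n_i}(\mathbb{C})$, with $P_i$ the units of the summands; set $Q_j=JP_jJ^{-1}$, $D_{ij,kl}=P_iQ_jDP_kQ_l$, $D_0=\sum_{i\neq k}D_{ij,kj}$ (sum over $i,j,k$ with $i\ne k$), $D_1=\sum_{j\neq l}D_{ij,il}$ (sum over $i,j,l$ with $j\neq l$), $D_R=\sum_{i,j}D_{ij,ij}$. For $\xi\in\mathrm{End}_{\mathbb{C}}(H)$, $\xi^\circ=J\xi^*J^{-1}$, and $S^\circ=\{\xi^\circ:\xi\in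 S\}$. $\mathcal{C}\ell_D(A)$ is the complex $*$-subalgebra of $\mathrm{End}_{\mathbb{C}}(H)$ generated by $A$ and the operators $a[D,b]$, $a,b\in A$. *)

From mathcomp Require Import all_boot all_algebra.
From mathcomp Require Import reals complex.
Set Implicit Arguments. Unset Strict Implicit. Unset Printing Implicit Defensive.
Import GRing.Theory Num.Theory.
Local Open Scope ring_scope.

Section Defs.
Variables (R : realType) (n : nat).
Local Notation C := (R[i]).
Local Notation M := ('M[C]_n).

Definition conjm (x : M) : M := map_mx Num.conj x.
Definition adj (x : M) : M := (conjm x)^T.
Definition comm (x y : M) : M := x *m y - y *m x.

(* The antilinear isometry J of C^n is encoded by a unitary U with
   J v = U (conj v).  Then J x J^{-1} = U (conj x) U^*. *)
Definition Jconj (U x : M) : M := U *m conjm x *m adj U.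
Definition opp (U x : M) : M := Jconj U (adj x).

Definition cstar_subalg (S : M -> Prop) : Prop :=
  [/\ S 1%:M,
      (forall x y, S x -> S y -> S (x + y)),
      (forall (c : C) x, S x -> S (c *: x)),
      (forall x y, S x -> S y -> S (x *m y)) &
      (forall x, S x -> S (adj x))].

Definition real_star_subalg (S : M -> Prop) : Prop :=
  [/\ S 1%:M,
      (forall x y, S x -> S y -> S (x + y)),
      (forall (c : C) x, c \is Num.real -> S x -> S (c *: x)),
      (forall x y, S x -> S y -> S (x *m y)) &
      (forall x, S x -> S (adj x))].

Definition gen_cstar (G : M -> Prop) (x : M) : Prop :=
  forall S : M -> Prop, cstar_subalg S -> (forall g, G g -> S g) -> S x.

(* finite-dimensional real spectral triple (A, H = C^n, D, J = U o conj);
   gam = Some (gamma, eps'') in the even case, None in the odd case *)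
Definition real_spectral_triple (A : M -> Prop) (D U : M) (eps eps' : C)
    (gam : option (M * C)) : Prop :=
  real_star_subalg A /\
  adj D = D /\
  (U *m adj U = 1%:M /\ adj U *m U = 1%:M) /\
  ((eps = 1 \/ eps = -1) /\ (eps' = 1 \/ eps' = -1)) /\
  U *m conjm U = eps%:M /\
  U *m conjm D = eps' *: (D *m U) /\
  (forall a b, A a -> A b -> comm a (Jconj U b) = 0) /\
  (forall a b, A a -> A b -> comm (comm D a) (Jconj U b) = 0) /\
  (match gam with
   | None => True
   | Some (g, eps'') =>
       adj g = g /\ g *m g = 1%:M /\
       (forall a, A a -> comm g a = 0) /\
       g *m D = - (D *m g) /\
       (eps'' = 1 \/ eps'' = -1) /\
       U *m conjm g = eps'' *: (g *m U)
   end).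

Definition AC (A : M -> Prop) := gen_cstar A.

(* central projections of A_C, and minimal ones (= units of the simple
   summands of A_C = direct sum of full matrix algebras) *)
Definition central_proj (A : M -> Prop) (P : M) : Prop :=
  [/\ AC A P, P *m P = P, adj P = P, P != 0 &
      forall x, AC A x -> P *m x = x *m P].

Definition min_central_proj (A : M -> Prop) (P : M) : Prop :=
  central_proj A P /\
  forall Q, central_proj A Q -> Q *m P = Q -> Q = P.

Definition ClD (A : M -> Prop) (D : M) : M -> Prop :=
  gen_cstar (fun x => A x \/ exists a b, [/\ A a, A b & x = a *m comm D b]).

Definition second_order (A : M -> Prop) (D U : M) : Prop :=
  forall x y, ClD A D x -> ClD A D y -> x *m opp U y = opp U y *m x.

Section Blocks.
Variables (N : nat) (P : 'I_N -> M) (U D : M).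
Definition Qp (j : 'I_N) : M := Jconj U (P j).
Definition Dblk (i j k l : 'I_N) : M := P i *m Qp j *m D *m P k *m Qp l.
Definition D0 : M := \sum_(i < N) \sum_(j < N) \sum_(k < N | k != i) Dblk i j k j.
Definition D1 : M := \sum_(i < N) \sum_(j < N) \sum_(l < N | l != j) Dblk i j i l.
Definition DR : M := \sum_(i < N) \sum_(j < N) Dblk i j i j.
End Blocks.

End Defs.

(* The order-zero and first-order conditions extend from A to the complex *-algebra A_C, so
   the minimal central projections P_i of A_C and their images Q_j = J P_j J^-1 form two
   commuting partitions of unity.  Pinching D by them, D - sum_j Q_j D Q_j = sum_j [D, Q_j] Q_j
   commutes with A_C and D - sum_i P_i D P_i commutes with J A_C J^-1; these are D_1 and D_0,
   and D = D_0 + D_1 + D_R.  As D_R commutes with A and, being J-invariant up to sign, with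
   J A J^-1, we get [D, a] = [D_0, a] and [D, J b J^-1] = [D_1, J b J^-1] for a, b in A, and
   the Jacobi identity turns [[D, a], [D, J b J^-1]] into [[[D_0, D_1], a], J b J^-1].
   So [D_0, D_1] = 0 makes the generators a, a [D, b] of Cl_D(A) commute with J Cl_D(A) J^-1,
   which is enough as both are *-algebras.  Conversely, the second-order condition for
   [D, P_i] and [D, P_j] gives [[[D_0, D_1], P_i], Q_j] = 0; since [D_0, D_1] is also killed
   by both pinchings, it commutes with every P_i and hence equals its P-pinching, 0. *)

From HB Require Import structures.
From Pilot Require Import Defs.
From mathcomp Require Import all_boot all_algebra.
From mathcomp Require Import reals complex.
From Stdlib Require Import Classical.
Import GRing.Theory Num.Theory.
Local Open Scope ring_scope.
Set Implicit Arguments. Unset Strict Implicit. Unset Printing Implicit Defensive.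

Section LieBracket.
Variable T : pzRingType.
Implicit Types a b d x y z : T.

Definition lie x y := x * y - y * x.

Lemma lie_eq0 x y : lie x y = 0 <-> GRing.comm x y.
Proof. by split=> [/subr0_eq | xy] //; rewrite /lie xy subrr. Qed.

Lemma lie0r x : lie 0 x = 0.
Proof. by rewrite /lie mul0r mulr0 subrr. Qed.

Lemma lier1 x : lie x 1 = 0.
Proof. by rewrite /lie mulr1 mul1r subrr. Qed.

Lemma lie_skew x y : lie y x = - lie x y.
Proof. by rewrite /lie opprB. Qed.

Lemma lieNl x y : lie (- x) y = - lie x y.
Proof. by rewrite /lie mulNr mulrN opprB opprK addrC. Qed.

Lemma lieDl x y z : lie (x + y) z = lie x z + lie y z.
Proof. by rewrite /lie mulrDl mulrDr opprD addrACA. Qed.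

Lemma lie_commDl x y z : GRing.comm y z -> lie (x + y) z = lie x z.
Proof. by move=> /lie_eq0 yz; rewrite lieDl yz addr0. Qed.

Lemma lie_is_zmod_morphism x : zmod_morphism (lie x).
Proof.
move=> y z; rewrite /lie mulrBl mulrBr !opprB [LHS]addrACA [RHS]addrACA.
by rewrite [- _ - _]addrC.
Qed.

Lemma lieMr x y z : lie x (y * z) = lie x y * z + y * lie x z.
Proof. by rewrite /lie mulrBl mulrBr !mulrA addrA subrK. Qed.

Lemma commNl x y : GRing.comm x y -> GRing.comm (- x) y.
Proof. by move=> xy; apply/commr_sym/commrN/commr_sym. Qed.

Lemma commr_lie x y z : GRing.comm x y -> GRing.comm x z -> GRing.comm x (lie y z).
Proof. by move=> xy xz; apply: commrB; apply: commrM. Qed.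

Lemma lie_lieA x y z : GRing.comm x z -> lie x (lie y z) = lie (lie x y) z.
Proof.
move=> xz; rewrite /lie !(mulrBl, mulrBr) !mulrA xz -[y * z * x]mulrA -xz mulrA.
rewrite !opprB !addrA.
by rewrite [LHS]addrAC [RHS]addrAC; congr (_ + _); rewrite addrAC.
Qed.

Lemma commr_lie_swap x y z :
  GRing.comm x y -> GRing.comm (lie z x) y -> GRing.comm (lie z y) x.
Proof.
move=> xy /lie_eq0 zxy; apply/lie_eq0.
by rewrite -[LHS]opprK -lie_skew lie_lieA // [lie x z]lie_skew lieNl opprK zxy.
Qed.

Lemma lie_lie_lie d0 d1 a b : GRing.comm d0 b -> GRing.comm d1 a -> GRing.comm a b ->
  lie (lie d0 a) (lie d1 b) = lie (lie (lie d0 d1) a) b.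
Proof.
move=> d0b d1a ab; rewrite lie_lieA; last first.
  by apply/commr_sym/commr_lie; apply/commr_sym.
rewrite -[lie d0 a]opprK -lie_skew lieNl -lie_lieA; last exact/commr_sym.
by rewrite -lie_skew.
Qed.
End LieBracket.

HB.instance Definition _ (T : pzRingType) (x : T) :=
  GRing.isZmodMorphism.Build T T (lie x) (lie_is_zmod_morphism x).

Section Pinching.
Variables (T : pzRingType) (N : nat) (E : 'I_N -> T).
Hypothesis E_idem : forall k, E k * E k = E k.
Hypothesis E_orth : forall i k, i != k -> E i * E k = 0.
Hypothesis E_sum : \sum_k E k = 1.
Implicit Types X Y : T.

Definition pinch X := \sum_k E k * X * E k.

Lemma pinch_is_zmod_morphism : zmod_morphism pinch.
Proof. by move=> X Y; rewrite -sumrB; apply: eq_bigr => k _; rewrite mulrBr mulrBl. Qed.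

Lemma sum_neq_partition X i : \sum_(k | k != i) X * E k = X - X * E i.
Proof.
have sumXE : \sum_k X * E k = X by rewrite -mulr_sumr E_sum mulr1.
by rewrite -{2}sumXE [in RHS](bigD1 i) //= addrC addrK.
Qed.

Lemma pinch_commr X k : GRing.comm (pinch X) (E k).
Proof.
rewrite /GRing.comm /pinch mulr_suml mulr_sumr (bigD1 k) //= [RHS](bigD1 k) //=.
rewrite !big1 => [|i ik|i ik].
- by rewrite !addr0 -!mulrA E_idem !mulrA E_idem.
- by rewrite !mulrA E_orth ?mul0r // eq_sym.
- by rewrite -!mulrA E_orth ?mulr0.
Qed.

Lemma pinch_id X : (forall k, GRing.comm X (E k)) -> pinch X = X.
Proof.
move=> XE; rewrite /pinch (eq_bigr (fun k => X * E k)) => [|k _].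
  by rewrite -mulr_sumr E_sum mulr1.
by rewrite -XE -mulrA E_idem.
Qed.

Lemma pinch_idem X : pinch (pinch X) = pinch X.
Proof. exact/pinch_id/pinch_commr. Qed.

Lemma pinch_lie_l X Y : (forall k, GRing.comm Y (E k)) -> pinch (lie X Y) = lie (pinch X) Y.
Proof.
move=> YE; rewrite /pinch /lie mulr_suml mulr_sumr -sumrB.
by apply: eq_bigr => k _; rewrite mulrBr mulrBl !mulrA -YE -!mulrA YE.
Qed.

Lemma pinch_lie_r X Y : (forall k, GRing.comm Y (E k)) -> pinch (lie Y X) = lie Y (pinch X).
Proof.
move=> YE; rewrite /pinch /lie mulr_suml mulr_sumr -sumrB.
by apply: eq_bigr => k _; rewrite mulrBr mulrBl !mulrA -YE -!mulrA YE.
Qed.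

Lemma subr_pinch X : X - pinch X = \sum_k lie X (E k) * E k.
Proof.
rewrite /lie (eq_bigr (fun k => X * E k - E k * X * E k)) => [|k _].
  by rewrite sumrB -mulr_sumr E_sum mulr1.
by rewrite mulrBl -mulrA E_idem.
Qed.

Lemma pinch_comm_pres X Y :
  (forall k, GRing.comm (E k) Y) -> GRing.comm X Y -> GRing.comm (pinch X) Y.
Proof.
move=> EY XY; apply/commr_sym/commr_sum => k _.
by apply: commrM; [apply: commrM|]; apply/commr_sym.
Qed.
End Pinching.

HB.instance Definition _ (T : pzRingType) N (E : 'I_N -> T) :=
  GRing.isZmodMorphism.Build T T (pinch E) (pinch_is_zmod_morphism E).

Lemma pinchC (T : pzRingType) N (E F : 'I_N -> T) X :
  (forall i j, GRing.comm (E i) (F j)) -> pinch E (pinch F X) = pinch F (pinch E X).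
Proof.
move=> EF; rewrite /pinch; under eq_bigr do rewrite mulr_sumr mulr_suml.
rewrite exchange_big; apply: eq_bigr => j _; rewrite mulr_sumr mulr_suml.
by apply: eq_bigr => i _; rewrite !mulrA EF -!mulrA -EF.
Qed.

Lemma adj_is_zmod_morphism (R : realType) n : zmod_morphism (@adj R n).
Proof. by move=> x y; rewrite /adj /conjm map_mxB linearB. Qed.

HB.instance Definition _ (R : realType) n :=
  GRing.isZmodMorphism.Build _ _ (@adj R n) (@adj_is_zmod_morphism R n).

Lemma Jconj_is_zmod_morphism (R : realType) n (U : 'M[R[i]]_n) : zmod_morphism (Jconj U).
Proof. by move=> x y; rewrite /Jconj /conjm map_mxB mulmxBr mulmxBl. Qed.

HB.instance Definition _ (R : realType) n (U : 'M[R[i]]_n) :=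
  GRing.isZmodMorphism.Build _ _ (Jconj U) (Jconj_is_zmod_morphism U).

Section MatrixAdjoint.
Variables (R : realType) (n : nat).
Local Notation M := 'M[R[i]]_n.
Implicit Types (c : R[i]) (x y : M).

Lemma conjmM x y : conjm (x * y) = conjm x * conjm y.
Proof. exact: map_mxM. Qed.

Lemma conjmK x : conjm (conjm x) = x.
Proof. by apply/matrixP => i j; rewrite !mxE conjCK. Qed.

Lemma adjM x y : adj (x * y) = adj y * adj x.
Proof. by rewrite /adj conjmM trmx_mul. Qed.

Lemma adjZ c x : adj (c *: x) = c^* *: adj x.
Proof. by rewrite /adj /conjm map_mxZ linearZ. Qed.

Lemma adj1 : adj (1 : M) = 1.
Proof. by rewrite /adj /conjm map_mx1 trmx1. Qed.

Lemma adjK x : adj (adj x) = x.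
Proof. by apply/matrixP => i j; rewrite !mxE conjCK. Qed.

Lemma adj_conjm x : adj (conjm x) = conjm (adj x).
Proof. by apply/matrixP => i j; rewrite !mxE. Qed.

Lemma commrZ x c y : GRing.comm x y -> GRing.comm x (c *: y).
Proof. by move=> xy; rewrite /GRing.comm -[x * _]scalemxAr -[_ * x]scalemxAl !mulmxE xy. Qed.

Lemma pinchZ N (E : 'I_N -> M) c x : pinch E (c *: x) = c *: pinch E x.
Proof.
by rewrite /pinch scaler_sumr; apply: eq_bigr => k _; rewrite scalemxAl scalemxAr.
Qed.

Lemma comm_adj x y : GRing.comm x y -> GRing.comm (adj x) (adj y).
Proof. by rewrite /GRing.comm -!adjM => ->. Qed.

Lemma adj_lie x y : adj (lie x y) = lie (adj y) (adj x).
Proof. by rewrite /lie raddfB /= !adjM. Qed.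

Lemma adj_lie_sa (D : M) x : adj D = D -> adj (lie D x) = - lie D (adj x).
Proof. by move=> D_sa; rewrite adj_lie D_sa -lie_skew. Qed.

Lemma lieZr x c y : lie x (c *: y) = c *: lie x y.
Proof. by rewrite /lie scalerBr [c *: (x * y)]scalemxAr [c *: (y * x)]scalemxAl. Qed.

Lemma lieZl c x y : lie (c *: x) y = c *: lie x y.
Proof. by rewrite -[lie _ _]opprK -lie_skew lieZr -scalerN -lie_skew. Qed.
End MatrixAdjoint.

Section StarSubalgebra.
Variables (R : realType) (n : nat).
Local Notation M := 'M[R[i]]_n.
Implicit Types (c : R[i]) (x y : M) (S G T : M -> Prop).

Section Closure.
Variable S : M -> Prop.
Hypothesis S_subalg : cstar_subalg S.

Lemma cstar1 : S 1.
Proof. by case: S_subalg. Qed.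

Lemma cstarD x y : S x -> S y -> S (x + y).
Proof. by case: S_subalg => _ SD _ _ _; apply: SD. Qed.

Lemma cstarZ c x : S x -> S (c *: x).
Proof. by case: S_subalg => _ _ SZ _ _; apply: SZ. Qed.

Lemma cstarM x y : S x -> S y -> S (x * y).
Proof. by case: S_subalg => _ _ _ SM _; apply: SM. Qed.

Lemma cstar_adj x : S x -> S (adj x).
Proof. by case: S_subalg => _ _ _ _ SA; apply: SA. Qed.

Lemma cstarN x : S x -> S (- x).
Proof. by rewrite -scaleN1r; apply: cstarZ. Qed.

Lemma cstar0 : S 0.
Proof. by rewrite -(scale0r (1 : M)); apply/cstarZ/cstar1. Qed.

Lemma cstarB x y : S x -> S y -> S (x - y).
Proof. by move=> Sx Sy; apply/cstarD/cstarN. Qed.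

Lemma cstar_sum I r (P : pred I) (F : I -> M) :
  (forall i, P i -> S (F i)) -> S (\sum_(i <- r | P i) F i).
Proof. by move=> SF; elim/big_ind: _ => //; [apply: cstar0 | apply: cstarD]. Qed.
End Closure.

Lemma gen_cstar_subalg G : cstar_subalg (gen_cstar G).
Proof.
split=> [S /cstar1 //|x y Gx Gy S SS SG|c x Gx S SS SG|x y Gx Gy S SS SG|x Gx S SS SG].
- by apply: (cstarD SS); [apply: Gx | apply: Gy].
- by apply: (cstarZ SS); apply: Gx.
- by apply: (cstarM SS); [apply: Gx | apply: Gy].
- by apply: (cstar_adj SS); apply: Gx.
Qed.

Lemma gen_cstar_base G x : G x -> gen_cstar G x.
Proof. by move=> Gx S _; apply. Qed.

Lemma gen_cstar_min G S :
  cstar_subalg S -> (forall g, G g -> S g) -> forall x, gen_cstar G x -> S x.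
Proof. by move=> SS SG x; apply. Qed.

Lemma cstar_commutant T :
  cstar_subalg (fun x => forall t, T t -> GRing.comm x t /\ GRing.comm (adj x) t).
Proof.
split=> [t _|x y xT yT t Tt|c x xT t Tt|x y xT yT t Tt|x xT t Tt].
- by rewrite adj1; split; apply/commr_sym/commr1.
- have [[xt axt] [yt ayt]] := (xT t Tt, yT t Tt).
  by rewrite raddfD /=; split; apply/commr_sym/commrD; apply/commr_sym.
- by have [xt axt] := xT t Tt; rewrite adjZ; split; apply/commr_sym/commrZ.
- have [[xt axt] [yt ayt]] := (xT t Tt, yT t Tt).
  by rewrite adjM; split; apply/commr_sym/commrM; apply/commr_sym.
- by rewrite adjK; have [] := xT t Tt.
Qed.

Lemma cstar_subalg_lie (D : M) S : adj D = D -> cstar_subalg S ->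
  cstar_subalg (fun x => S x /\ S (lie D x)).
Proof.
move=> D_sa SS; split=> [|x y [Sx SDx] [Sy SDy]|c x [Sx SDx]|x y [Sx SDx] [Sy SDy]|x [Sx SDx]].
- by split; [apply: cstar1 | rewrite lier1; apply: cstar0].
- by rewrite raddfD /=; split; apply: (cstarD SS).
- by rewrite lieZr; split; apply: (cstarZ SS).
- by rewrite mulmxE lieMr; split; [|apply: (cstarD SS)]; apply: (cstarM SS).
- split; first exact: (cstar_adj SS).
  by rewrite -[lie D _]opprK -(adj_lie_sa _ D_sa); apply/(cstarN SS)/(cstar_adj SS).
Qed.
End StarSubalgebra.

Section RealStructure.
Variables (R : realType) (n : nat) (U : 'M[R[i]]_n) (eps : R[i]).
Hypothesis U_adjU : U * adj U = 1.
Hypothesis adjU_U : adj U * U = 1.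
Hypothesis eps_sign : eps = 1 \/ eps = -1.
Hypothesis U_conjU : U * conjm U = eps%:M.
Local Notation M := 'M[R[i]]_n.
Local Notation J := (Jconj U).
Implicit Types (c : R[i]) (x y : M) (S G : M -> Prop).

Lemma Jconj1 : J 1 = 1.
Proof. by rewrite /Jconj /conjm map_mx1 mulmx1. Qed.

Lemma JconjM x y : J (x * y) = J x * J y.
Proof.
by rewrite /Jconj !mulmxE conjmM !mulrA -[U * _ * adj U * U]mulrA adjU_U mulr1.
Qed.

Lemma JconjZ c x : J (c *: x) = c^* *: J x.
Proof. by rewrite /Jconj /conjm map_mxZ scalemxAl scalemxAr. Qed.

Lemma Jconj_adj x : J (adj x) = adj (J x).
Proof. by rewrite /Jconj !mulmxE !adjM adjK adj_conjm mulrA. Qed.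

Lemma JconjK x : J (J x) = x.
Proof.
have conj_eps : eps^* = eps by case: eps_sign => ->; rewrite ?rmorphN rmorph1.
have eps2 : eps * eps = 1 by case: eps_sign => ->; rewrite ?mulrNN mulr1.
have adjU_conj : conjm (adj U) * adj U = eps%:M.
  by rewrite -adj_conjm -adjM U_conjU /adj /conjm map_scalar_mx tr_scalar_mx /= conj_eps.
rewrite /Jconj !mulmxE !conjmM conjmK !mulrA -[U * _ * x * _ * adj U]mulrA adjU_conj U_conjU.
by rewrite [eps%:M * x]mul_scalar_mx [_ * eps%:M]mul_mx_scalar scalerA eps2 scale1r.
Qed.

Lemma Jconj_lie x y : J (lie x y) = lie (J x) (J y).
Proof. by rewrite raddfB /= !JconjM. Qed.

Lemma Jconj_pinch N (E : 'I_N -> M) X : J (pinch E X) = pinch (fun k => J (E k)) (J X).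
Proof. by rewrite raddf_sum; apply: eq_bigr => k _; rewrite /= !JconjM. Qed.

Lemma cstar_Jcommutant S :
  cstar_subalg (fun y => forall s, S s -> GRing.comm s (J y) /\ GRing.comm (adj s) (J y)).
Proof.
split=> [s _|x y xS yS s Ss|c x xS s Ss|x y xS yS s Ss|x xS s Ss].
- by rewrite Jconj1; split; apply: commr1.
- by have [[sx asx] [sy asy]] := (xS s Ss, yS s Ss); rewrite raddfD /=; split; apply: commrD.
- by have [sx asx] := xS s Ss; rewrite JconjZ; split; apply: commrZ.
- have [[sx asx] [sy asy]] := (xS s Ss, yS s Ss).
  by rewrite mulmxE JconjM; split; apply: commrM.
- have [sx asx] := xS s Ss; rewrite Jconj_adj; split; last exact: comm_adj.
  by rewrite -[s]adjK; apply: comm_adj.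
Qed.

Lemma gen_cstar_commJ G :
  (forall g h, G g -> G h -> GRing.comm g (J h) /\ GRing.comm g (J (adj h))) ->
  forall x y, gen_cstar G x -> gen_cstar G y -> GRing.comm x (J y).
Proof.
move=> GJG.
have comm_gens : forall x, gen_cstar G x ->
    forall t, (exists2 h, G h & t = J h) -> GRing.comm x t /\ GRing.comm (adj x) t.
  apply: gen_cstar_min; first exact: cstar_commutant.
  move=> g Gg _ [h Gh ->]; have [gh gah] := GJG g h Gg Gh; split=> //.
  by rewrite -[J h]adjK; apply: comm_adj; rewrite -Jconj_adj.
suff Jcomm y : gen_cstar G y ->
    forall s, gen_cstar G s -> GRing.comm s (J y) /\ GRing.comm (adj s) (J y).
  by move=> x y Gx Gy; have [] := Jcomm y Gy x Gx.
move: y; apply: gen_cstar_min; first exact: cstar_Jcommutant.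
by move=> h Gh s Gs; apply: comm_gens; last exists h.
Qed.

End RealStructure.

Section CentralProjections.
Variables (R : realType) (n : nat).
Local Notation M := 'M[R[i]]_n.
Variable A : M -> Prop.
Local Notation A_C := (Defs.AC A).
Implicit Types E F : M.

Lemma proj_rank_lt E F : adj E = E -> adj F = F -> F * F = F -> F * E = F ->
  F != E -> (\rank F < \rank E)%N.
Proof.
move=> E_sa F_sa F_idem FE /eqP FneE; rewrite ltnNge; apply/negP => rkEF; apply: FneE.
have sub : (F <= E)%MS by apply/submxP; exists F; rewrite mulmxE FE.
have /submxP [X defE] : (E <= F)%MS.
  by rewrite -(mxrank_leqif_sup sub).2 eqn_leq (mxrank_leqif_sup sub).1.
have EF_F : E * F = F by rewrite -{1}E_sa -{1}F_sa -adjM FE.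
rewrite mulmxE in defE.
by rewrite -EF_F {1}defE -mulrA F_idem -defE.
Qed.

Lemma central_projP E : central_proj A E <->
  [/\ A_C E, E * E = E, adj E = E, E != 0 & forall x, A_C x -> GRing.comm E x].
Proof. exact: conj id id. Qed.

Lemma central_projM E F : central_proj A E -> central_proj A F -> E * F != 0 ->
  central_proj A (E * F).
Proof.
case/central_projP=> ACE E_idem E_sa _ E_c /central_projP[ACF F_idem F_sa _ F_c] EF_nz.
apply/central_projP; split=> // [|||x ACx].
- exact: (cstarM (gen_cstar_subalg _)).
- by rewrite -mulrA [F * _]mulrA (F_c E ACE) -!mulrA F_idem mulrA E_idem.
- by rewrite adjM E_sa F_sa (F_c E ACE).
- by apply/commr_sym/commrM; apply/commr_sym; [apply: E_c | apply: F_c].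
Qed.

Lemma exists_min_central_proj E : central_proj A E ->
  exists2 Q, min_central_proj A Q & Q * E = Q.
Proof.
have [m] := ubnP (\rank E); elim: m E => // m IH E rkE cE.
have [[Q [cQ QE QneE]] | Emin] :=
  classic (exists Q, [/\ central_proj A Q, Q * E = Q & Q != E]).
  have [[_ Q_idem Q_sa _ _] [_ _ E_sa _ _]] := (cQ, cE).
  have [Q' minQ' Q'Q] := IH Q (leq_trans (proj_rank_lt E_sa Q_sa Q_idem QE QneE) rkE) cQ.
  by exists Q' => //; rewrite -Q'Q -mulrA QE.
exists E; last by case: cE.
split=> // Q cQ QE; apply/eqP/negP => /negP QneE.
by apply: Emin; exists Q.
Qed.

Lemma central_proj_compl E : A_C E -> E * E = E -> adj E = E ->
  (forall x, A_C x -> GRing.comm E x) -> 1 - E != 0 -> central_proj A (1 - E).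
Proof.
move=> ACE E_idem E_sa E_c nz; split=> // [|||x ACx].
- by apply: (cstarB (gen_cstar_subalg _)) => //; apply: (cstar1 (gen_cstar_subalg _)).
- by rewrite mulmxE mulrBl mul1r mulrBr mulr1 E_idem subrr subr0.
- by rewrite raddfB /= adj1 E_sa.
- by rewrite !mulmxE mulrBl mulrBr mul1r mulr1 E_c.
Qed.
End CentralProjections.

Section SpectralTriple.
Variables (R : realType) (n : nat).
Local Notation M := 'M[R[i]]_n.
Variables (A : M -> Prop) (D U : M) (eps eps' : R[i]) (N : nat) (P : 'I_N -> M).
Local Notation J := (Jconj U).
Local Notation A_C := (Defs.AC A).
Hypothesis A_real : real_star_subalg A.
Hypothesis D_sa : adj D = D.
Hypothesis U_adjU : U * adj U = 1.
Hypothesis adjU_U : adj U * U = 1.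
Hypothesis eps_sign : eps = 1 \/ eps = -1.
Hypothesis eps'_sign : eps' = 1 \/ eps' = -1.
Hypothesis U_conjU : U * conjm U = eps%:M.
Hypothesis U_conjD : U * conjm D = eps' *: (D * U).
Hypothesis order_zero_eq0 : forall a b, A a -> A b -> comm a (J b) = 0.
Hypothesis first_order_eq0 : forall a b, A a -> A b -> comm (comm D a) (J b) = 0.
Hypothesis P_inj : injective P.
Hypothesis P_min : forall k, min_central_proj A (P k).
Hypothesis P_all : forall Q, min_central_proj A Q -> exists k, Q = P k.
Hypothesis DR_A : forall a, A a -> DR P U D *m a = a *m DR P U D.

Lemma A1 : A 1.
Proof. by case: A_real. Qed.

Lemma A_adj a : A a -> A (adj a).
Proof. by case: A_real => _ _ _ _; apply. Qed.

Lemma order_zero a b : A a -> A b -> GRing.comm a (J b).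
Proof. by move=> Aa Ab; apply/lie_eq0/order_zero_eq0. Qed.

Lemma first_order a b : A a -> A b -> GRing.comm (lie D a) (J b).
Proof. by move=> Aa Ab; apply/lie_eq0/first_order_eq0. Qed.

Lemma order_zero_AC x y : A_C x -> A_C y -> GRing.comm x (J y).
Proof.
apply: (gen_cstar_commJ U_adjU adjU_U) => a b Aa Ab.
by split; apply: order_zero => //; apply: A_adj.
Qed.

Lemma first_order_AC x y : A_C x -> A_C y -> GRing.comm (lie D x) (J y).
Proof.
move=> ACx ACy.
have first_order_A a z : A a -> A_C z -> GRing.comm (lie D a) (J z).
  move=> Aa ACz; have [] // := gen_cstar_min (cstar_Jcommutant U_adjU adjU_U (eq (lie D a)))
    _ ACz (lie D a) erefl.
  move=> b Ab _ <-; split; first exact: first_order.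
  by rewrite (adj_lie_sa _ D_sa); apply/commNl/first_order => //; apply: A_adj.
pose T t := exists2 z, A_C z & t = J z.
pose S x := forall t, T t -> GRing.comm x t /\ GRing.comm (adj x) t.
suff S_lie : forall x, A_C x -> S x /\ S (lie D x).
  by have [_ /(_ (J y)) []] := S_lie x ACx; first exists y.
apply: gen_cstar_min; first exact/cstar_subalg_lie/cstar_commutant.
move=> a Aa; split=> t [z ACz ->].
  have ACa : A_C a by exact: gen_cstar_base.
  by split; apply: order_zero_AC => //; apply: (cstar_adj (gen_cstar_subalg _)).
rewrite (adj_lie_sa _ D_sa); split; [|apply: commNl]; apply: first_order_A => //.
exact: A_adj.
Qed.

Lemma first_order_AC_J x y : A_C x -> A_C y -> GRing.comm (lie D (J y)) x.
Proof.
move=> ACx ACy; apply: commr_lie_swap; first exact: order_zero_AC.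
exact: first_order_AC.
Qed.

Lemma P_AC k : A_C (P k).
Proof. by case: (P_min k) => [[]]. Qed.

Lemma P_idem k : P k * P k = P k.
Proof. by case: (P_min k) => [[]]. Qed.

Lemma P_adj k : adj (P k) = P k.
Proof. by case: (P_min k) => [[]]. Qed.

Lemma P_central k x : A_C x -> GRing.comm (P k) x.
Proof. by case: (P_min k) => [[_ _ _ _ Pc]] _; apply: Pc. Qed.

Lemma P_orth i k : i != k -> P i * P k = 0.
Proof.
move=> ik; apply/eqP/negP => /negP nz.
have cPiPk := central_projM (P_min i).1 (P_min k).1 nz.
have Pi_eq : P i * P k = P i.
  apply: (P_min i).2 => //; rewrite mulmxE -mulrA (P_central k (P_AC i)).
  by rewrite mulrA P_idem.
have Pk_eq : P i * P k = P k by apply: (P_min k).2 => //; rewrite mulmxE -mulrA P_idem.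
by move: ik; rewrite (P_inj (etrans (esym Pi_eq) Pk_eq)) eqxx.
Qed.

Lemma P_mul_sum k : P k * \sum_i P i = P k.
Proof.
rewrite mulr_sumr (bigD1 k) //= P_idem big1 ?addr0 // => i ik.
by rewrite P_orth // eq_sym.
Qed.

Lemma P_sum : \sum_k P k = 1.
Proof.
set S := \sum_k P k; apply/eqP; rewrite eq_sym -subr_eq0; apply/negPn/negP => nz.
have ACS : A_C S by apply: (cstar_sum (gen_cstar_subalg _)) => k _; apply: P_AC.
have S_idem : S * S = S by rewrite {1}/S mulr_suml; apply: eq_bigr => k _; apply: P_mul_sum.
have S_sa : adj S = S by rewrite raddf_sum; apply: eq_bigr => k _; apply: P_adj.
have S_c x : A_C x -> GRing.comm S x.
  by move=> ACx; apply/commr_sym/commr_sum => k _; apply/commr_sym/P_central.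
have [Q minQ] := exists_min_central_proj (central_proj_compl ACS S_idem S_sa S_c nz).
have [k ->] := P_all minQ; rewrite mulrBr mulr1 P_mul_sum subrr => P0.
by case: (P_min k) => [[_ _ _]]; rewrite -P0 eqxx.
Qed.

Local Notation Q k := (J (P k)).
Local Notation Psi := (pinch P).
Local Notation Phi := (pinch (fun k => Q k)).

Lemma Q_idem k : Q k * Q k = Q k.
Proof. by rewrite -{3}P_idem (JconjM adjU_U). Qed.

Lemma Q_orth i k : i != k -> Q i * Q k = 0.
Proof. by move=> ik; rewrite -(JconjM adjU_U) (P_orth ik) raddf0. Qed.

Lemma Q_sum : \sum_k Q k = 1.
Proof. by rewrite -raddf_sum /= P_sum (Jconj1 U_adjU). Qed.

Lemma JQ k : J (Q k) = P k.
Proof. exact: JconjK eps_sign U_conjU _. Qed.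

Lemma P_Q_comm i j : GRing.comm (P i) (Q j).
Proof. by apply: order_zero_AC; apply: P_AC. Qed.

Lemma subr_Phi_comm_AC x : A_C x -> GRing.comm (D - Phi D) x.
Proof.
move=> ACx; rewrite subr_pinch; [|exact: Q_idem|exact: Q_sum].
apply/commr_sym/commr_sum => l _; apply: commrM.
  by apply/commr_sym/first_order_AC_J => //; apply: P_AC.
by apply: order_zero_AC => //; apply: P_AC.
Qed.

Lemma subr_Psi_comm_JAC y : A_C y -> GRing.comm (D - Psi D) (J y).
Proof.
move=> ACy; rewrite subr_pinch; [|exact: P_idem|exact: P_sum].
apply/commr_sym/commr_sum => k _; apply: commrM.
  by apply/commr_sym/first_order_AC => //; apply: P_AC.
by apply/commr_sym/order_zero_AC => //; apply: P_AC.
Qed.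

Lemma Psi_subr_Phi : Psi (D - Phi D) = D - Phi D.
Proof.
apply: pinch_id => [k|| k]; [exact: P_idem | exact: P_sum |].
exact: subr_Phi_comm_AC (P_AC k).
Qed.

Lemma Phi_subr_Psi : Phi (D - Psi D) = D - Psi D.
Proof.
apply: pinch_id => [k|| k]; [exact: Q_idem | exact: Q_sum |].
exact: subr_Psi_comm_JAC (P_AC k).
Qed.

Lemma PsiC X : Psi (Phi X) = Phi (Psi X).
Proof. exact/pinchC/P_Q_comm. Qed.

Lemma DblkE i j k l : Dblk P U D i j k l = P i * Q j * D * P k * Q l.
Proof. by []. Qed.

Lemma DR_E : DR P U D = Psi (Phi D).
Proof.
apply: eq_bigr => i _; rewrite mulr_sumr mulr_suml; apply: eq_bigr => j _.
(* Generalizing [Q j] keeps [mulrA] from rewriting inside the unfolded [Jconj]. *)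
rewrite DblkE; move: (Q j) (P_Q_comm i j) => q Pq.
by rewrite !mulrA -[_ * q * P i]mulrA -Pq mulrA.
Qed.

Lemma D1_E : D1 P U D = D - Phi D.
Proof.
rewrite -Psi_subr_Phi raddfB /= -DR_E -sumrB; apply: eq_bigr => i _.
rewrite (eq_bigr (fun j => P i * Q j * D * P i - Dblk P U D i j i j)) => [|j _].
  by rewrite sumrB -!mulr_suml -mulr_sumr Q_sum mulr1.
exact: (sum_neq_partition Q_sum).
Qed.

Lemma D0_E : D0 P U D = D - Psi D.
Proof.
rewrite -Phi_subr_Psi raddfB /= -PsiC -DR_E -[Phi D]mul1r -P_sum mulr_suml -sumrB.
apply: eq_bigr => i _; rewrite /pinch mulr_sumr -sumrB; apply: eq_bigr => j _.
rewrite (eq_bigr (fun k => P i * Q j * D * Q j * P k)) => [|k _].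
  rewrite (sum_neq_partition P_sum) DblkE; move: (Q j) (P_Q_comm i j) => q Pq.
  by rewrite !mulrA -[_ * q * P i]mulrA -Pq mulrA.
by rewrite DblkE; move: (Q j) (P_Q_comm k j) => q Pq; rewrite -mulrA Pq mulrA.
Qed.

Local Notation "'D_0'" := (D0 P U D).
Local Notation "'D_1'" := (D1 P U D).
Local Notation "'D_R'" := (DR P U D).

Lemma D_decomp : D = D_0 + D_1 + D_R.
Proof. by rewrite D0_E D1_E DR_E -Psi_subr_Phi raddfB /= addrA !subrK. Qed.

Lemma D1_comm_AC x : A_C x -> GRing.comm D_1 x.
Proof. by rewrite D1_E; apply: subr_Phi_comm_AC. Qed.

Lemma D0_comm_JAC y : A_C y -> GRing.comm D_0 (J y).
Proof. by rewrite D0_E; apply: subr_Psi_comm_JAC. Qed.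

Lemma DR_comm_P k : GRing.comm D_R (P k).
Proof. by rewrite DR_E; apply: pinch_commr; [exact: P_idem | exact: P_orth]. Qed.

Lemma DR_comm_Q k : GRing.comm D_R (Q k).
Proof.
rewrite DR_E; apply: pinch_comm_pres => [i|]; first exact: P_Q_comm.
by apply: pinch_commr; [exact: Q_idem | exact: Q_orth].
Qed.

Lemma eps'_sqr : eps' * eps' = 1.
Proof. by case: eps'_sign => ->; rewrite ?mulrNN mulr1. Qed.

Lemma JD : J D = eps' *: D.
Proof.
by rewrite /Jconj !mulmxE U_conjD -[_ * adj U]scalemxAl mulmxE -mulrA U_adjU mulr1.
Qed.

Lemma J_lieD x : J (lie D x) = eps' *: lie D (J x).
Proof. by rewrite (Jconj_lie adjU_U) JD lieZl. Qed.

Lemma J_Phi X : J (Phi X) = Psi (J X).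
Proof. by rewrite (Jconj_pinch adjU_U); apply: eq_bigr => k _; rewrite JQ. Qed.

Lemma J_DR : J D_R = eps' *: D_R.
Proof. by rewrite DR_E (Jconj_pinch adjU_U) J_Phi JD !pinchZ PsiC. Qed.

Lemma DR_comm_JA b : A b -> GRing.comm D_R (J b).
Proof.
move=> Ab.
have JDR_Jb : GRing.comm (J D_R) (J b).
  by have := congr1 J (DR_A Ab); rewrite !(JconjM adjU_U).
rewrite -[D_R]scale1r -eps'_sqr -scalerA -J_DR.
by apply/commr_sym/commrZ/commr_sym.
Qed.

Lemma lieD_D0 x : GRing.comm D_1 x -> GRing.comm D_R x -> lie D x = lie D_0 x.
Proof. by move=> D1x DRx; rewrite {1}D_decomp (lie_commDl _ DRx) (lie_commDl _ D1x). Qed.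

Lemma lieD_D1 x : GRing.comm D_0 x -> GRing.comm D_R x -> lie D x = lie D_1 x.
Proof.
move=> D0x DRx.
by rewrite {1}D_decomp (lie_commDl _ DRx) [D_0 + _]addrC (lie_commDl _ D0x).
Qed.

Lemma lie_lieD a b : A a -> A b ->
  lie (lie D a) (lie D (J b)) = lie (lie (lie D_0 D_1) a) (J b).
Proof.
move=> Aa Ab; have ACa : A_C a by exact: gen_cstar_base.
have ACb : A_C b by exact: gen_cstar_base.
rewrite (lieD_D0 (D1_comm_AC ACa) (DR_A Aa)) (lieD_D1 (D0_comm_JAC ACb) (DR_comm_JA Ab)).
by apply: lie_lie_lie; [exact: D0_comm_JAC | exact: D1_comm_AC | exact: order_zero].
Qed.

Local Notation ClD_gen :=
  (fun x => A x \/ exists a b, [/\ A a, A b & x = a *m comm D b]).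

Lemma ClD_lie_AC x : A_C x -> ClD A D x /\ ClD A D (lie D x).
Proof.
move: x; apply: gen_cstar_min; first exact/cstar_subalg_lie/gen_cstar_subalg.
move=> a Aa; split; apply: gen_cstar_base; first by left.
by right; exists 1, a; rewrite mul1mx; split=> //; exact: A1.
Qed.

Lemma second_order_lie_PQ k l : second_order A D U -> GRing.comm (lie D (P k)) (lie D (Q l)).
Proof.
move=> SO; have := SO _ _ (ClD_lie_AC (P_AC k)).2 (ClD_lie_AC (P_AC l)).2.
rewrite /Defs.opp (adj_lie_sa _ D_sa) P_adj raddfN /= J_lieD => /(commrZ (- eps')).
by rewrite scaleNr scalerN opprK scalerA eps'_sqr scale1r.
Qed.

Lemma lie_D0_D1_eq0 :
  (forall k l, GRing.comm (lie D (P k)) (lie D (Q l))) -> lie D_0 D_1 = 0.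
Proof.
move=> lieD_PQ.
have D0_Q k : GRing.comm D_0 (Q k) by exact: D0_comm_JAC (P_AC k).
have D1_P k : GRing.comm D_1 (P k) by exact: D1_comm_AC (P_AC k).
have Phi_lie : Phi (lie D_0 D_1) = 0.
  by rewrite (pinch_lie_r _ D0_Q) D1_E raddfB /= (pinch_idem Q_idem Q_orth Q_sum) subrr raddf0.
have Psi_lie : Psi (lie D_0 D_1) = 0.
  by rewrite (pinch_lie_l _ D1_P) D0_E raddfB /= (pinch_idem P_idem P_orth P_sum) subrr lie0r.
have lie_P_Q k l : GRing.comm (lie (lie D_0 D_1) (P k)) (Q l).
  apply/lie_eq0; rewrite -lie_lie_lie; [|exact: D0_Q | exact: D1_P | exact: P_Q_comm].
  rewrite -(lieD_D0 (D1_P k) (DR_comm_P k)) -(lieD_D1 (D0_Q l) (DR_comm_Q l)).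
  exact/lie_eq0/lieD_PQ.
have lie_P k : GRing.comm (lie D_0 D_1) (P k).
  rewrite -[lie D_0 D_1]subr0 -Phi_lie (subr_pinch Q_idem Q_sum).
  apply/commr_sym/commr_sum => l _; apply: commrM; last exact: P_Q_comm.
  by apply/commr_sym/commr_lie_swap; [exact: P_Q_comm | exact: lie_P_Q].
by rewrite -Psi_lie (pinch_id P_idem P_sum lie_P).
Qed.

Lemma ClD_gen_comm_JA g e : lie D_0 D_1 = 0 -> ClD_gen g -> A e ->
  GRing.comm g (J e) /\ GRing.comm g (lie D (J e)).
Proof.
move=> D0D1_eq0 Gg Ae; have ACe : A_C e by exact: gen_cstar_base.
have A_lie a : A a -> GRing.comm a (J e) /\ GRing.comm a (lie D (J e)).
  move=> Aa; split; first exact: order_zero.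
  exact/commr_sym/(first_order_AC_J (gen_cstar_base Aa) ACe).
case: Gg => [Ag|[a [b [Aa Ab ->]]]]; first exact: A_lie.
have [a_Je a_DJe] := A_lie a Aa.
rewrite mulmxE; split; apply/commr_sym/commrM; apply/commr_sym.
- exact: a_Je.
- exact: first_order.
- exact: a_DJe.
- by apply/lie_eq0; rewrite (lie_lieD Ab Ae) D0D1_eq0 !lie0r.
Qed.

Lemma comm_J_ClD_gen g h :
  (forall e, A e -> GRing.comm g (J e) /\ GRing.comm g (lie D (J e))) -> ClD_gen h ->
  GRing.comm g (J h) /\ GRing.comm g (J (adj h)).
Proof.
move=> gJ [Ah|[a [b [Aa Ab ->]]]].
  by split; apply: (gJ _ _).1 => //; apply: A_adj.
rewrite mulmxE adjM (adj_lie_sa _ D_sa) !(JconjM adjU_U) raddfN /= !J_lieD.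
split; apply: commrM.
- exact: (gJ a Aa).1.
- exact: commrZ _ (gJ b Ab).2.
- exact/commrN/(commrZ _ (gJ _ (A_adj Ab)).2).
- exact: (gJ _ (A_adj Aa)).1.
Qed.

Lemma second_order_of_lie_eq0 : lie D_0 D_1 = 0 -> second_order A D U.
Proof.
move=> D0D1_eq0 x y ClDx ClDy; rewrite /Defs.opp.
apply: (gen_cstar_commJ U_adjU adjU_U) ClDx (cstar_adj (gen_cstar_subalg _) ClDy).
move=> g h Gg Gh; apply: comm_J_ClD_gen Gh => e Ae.
exact: ClD_gen_comm_JA.
Qed.

Lemma second_order_iff : second_order A D U <-> comm D_0 D_1 = 0.
Proof.
split; first by move=> SO; apply: lie_D0_D1_eq0 => k l; apply: second_order_lie_PQ.
exact: second_order_of_lie_eq0.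
Qed.
End SpectralTriple.

Theorem proposition9 (R : realType) (n : nat) (A : 'M[R[i]]_n -> Prop)
    (D U : 'M[R[i]]_n) (eps eps' : R[i]) (gam : option ('M[R[i]]_n * R[i]))
    (N : nat) (P : 'I_N -> 'M[R[i]]_n) :
  real_spectral_triple A D U eps eps' gam ->
  injective P ->
  (forall k, min_central_proj A (P k)) ->
  (forall Q, min_central_proj A Q -> exists k, Q = P k) ->
  (forall a, A a -> DR P U D *m a = a *m DR P U D) ->
  (second_order A D U <-> comm (D0 P U D) (D1 P U D) = 0).
Proof.
case=> A_real [D_sa [[U_adjU adjU_U] [[eps_sign eps'_sign] [U_conjU [U_conjD]]]]].
case=> order_zero_eq0 [first_order_eq0 _] P_inj P_min P_all DR_A.
exact: (second_order_iff A_real D_sa U_adjU adjU_U eps_sign eps'_sign U_conjU U_conjD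
  order_zero_eq0 first_order_eq0 P_inj P_min P_all DR_A).
Qed.
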